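(* (1) If $L\subseteq A^*$ is accepted by a nondeterministic finite automaton having depth $m$, then ${\downarrow}L$ and ${\downarrow}_<L$ are $\ell$-PT for $\ell=2m+2$. (2) The same holds if $L$ is accepted by a context-free grammar in quadratic normal form with $N$ nonterminals, with $\ell=4\cdot 3^{N-1}+2$.
   Context: The depth of an automaton is the maximum length of a simple (non-repeating) path from an initial state to some final state. A context-free grammar is in quadratic normal form if every production has one of the forms $X\to YZ$, $X\to Y$, $X\to a$ or $X\to\epsilon$, where $X,Y,Z$ are nonterminals and $a$ is a terminal letter. $u\sqsubseteq v$ (subword) means $u=a_1\cdots a_n$ with letters $a_i$ and $v=v_0a_1v_1\cdots a_nv_n$; $u\sqsubset v$ means $u\sqsubseteq v$ and $u\ne v$. ${\downarrow}L=\{v~|~\exists u\in L: v\sqsubseteq u\}$, ${\downarrow}_<L=\{v~|~\exists u\in L: v\sqsubset u\}$. $u\sim_n v$ iff $u,v$ have the same subwords of length at most $n$; $L$ is $n$-PT if it is a union of $\sim_n$-classes. *)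

From mathcomp Require Import all_boot.
Set Implicit Arguments. Unset Strict Implicit. Unset Printing Implicit Defensive.

Definition lang (A : Type) := seq A -> Prop.

(* u ⊑ v (scattered subword) is mathcomp's [subseq u v]. *)

Definition dclosure (A : eqType) (L : lang A) : lang A :=
  fun v => exists u, L u /\ subseq v u.
Definition sdclosure (A : eqType) (L : lang A) : lang A :=
  fun v => exists u, L u /\ subseq v u /\ v != u.

Definition simn (A : eqType) (n : nat) (u v : seq A) : Prop :=
  forall w : seq A, size w <= n -> subseq w u = subseq w v.

Definition PT (A : eqType) (n : nat) (L : lang A) : Prop :=
  forall u v : seq A, simn n u v -> (L u <-> L v).

Record nfa (A : finType) := Nfa {
  nfa_state : finType;
  nfa_init : pred nfa_state;
  nfa_final : pred nfa_state;
  nfa_trans : nfa_state -> A -> nfa_state -> bool }.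

Fixpoint nfa_accept_from (A : finType) (M : nfa A) (q : nfa_state M) (w : seq A)
  : bool :=
  match w with
  | [::] => @nfa_final A M q
  | a :: w' => [exists q' : nfa_state M, @nfa_trans A M q a q' && nfa_accept_from q' w']
  end.

Definition nfa_lang (A : finType) (M : nfa A) : lang A :=
  fun w => exists2 q, @nfa_init A M q & nfa_accept_from q w.

Definition nfa_edge (A : finType) (M : nfa A) (p q : nfa_state M) : bool :=
  [exists a : A, @nfa_trans A M p a q].

(* A simple path from an initial state to a final state: the sequence of its
   states [q0 :: qs], pairwise distinct; its length is the number of edges,
   i.e. [size qs]. *)
Definition simple_acc_path (A : finType) (M : nfa A) (q0 : nfa_state M)
  (qs : seq (nfa_state M)) : bool :=
  [&& @nfa_init A M q0, path (@nfa_edge A M) q0 qs,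
      @nfa_final A M (last q0 qs) & uniq (q0 :: qs)].

Definition nfa_depth (A : finType) (M : nfa A) (m : nat) : Prop :=
  (exists q0 qs, @simple_acc_path A M q0 qs /\ size qs = m) /\
  (forall q0 qs, @simple_acc_path A M q0 qs -> size qs <= m).

Record qnf_grammar (A : finType) := Qnf {
  nonterm : finType;
  start : nonterm;
  prod_bin : nonterm -> nonterm -> nonterm -> bool;  (* X -> Y Z *)
  prod_unit : nonterm -> nonterm -> bool;            (* X -> Y *)
  prod_term : nonterm -> A -> bool;                  (* X -> a *)
  prod_eps : pred nonterm }.                         (* X -> eps *)

Inductive derives (A : finType) (G : qnf_grammar A) : nonterm G -> seq A -> Prop :=
  | der_bin X Y Z u v : @prod_bin A G X Y Z -> @derives A G Y u -> @derives A G Z v ->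
      @derives A G X (u ++ v)
  | der_unit X Y u : @prod_unit A G X Y -> @derives A G Y u -> @derives A G X u
  | der_term X a : @prod_term A G X a -> @derives A G X [:: a]
  | der_eps X : @prod_eps A G X -> @derives A G X [::].

Definition cfg_lang (A : finType) (G : qnf_grammar A) : lang A :=
  fun w => @derives A G (start G) w.

From mathcomp Require Import all_boot zify.
Set Implicit Arguments. Unset Strict Implicit. Unset Printing Implicit Defensive.

(* An ideal is a product of atoms B^* and (a + eps).  Greedy matching decides
   membership, and a word outside an ideal with k atoms has a subword of length
   at most k + 1 outside it; so a language is n-PT as soon as each of its words
   lies in an ideal with fewer than n atoms that is contained in the language.
   For an automaton, an accepting run is shortened to a simple one, and each
   state p on it contributes the atom (letters on cycles through p)^*, giving an
   ideal with 2m + 1 atoms whose words embed into accepted words.  For a grammar,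
   the derivation tree is cut at the topmost occurrence of a nonterminal X:
   X =>* u X w and X derives x' without using X below the root, giving the ideal
   u^* I w^* where I covers x' by induction on the set of usable nonterminals.
   For the strict closure either the words of the ideal embed into strictly
   longer words (a cycle or a nonempty pump adds a letter), or the word itself is
   short enough to be its own ideal of optional letters. *)

Section Ideals.
Variable A : eqType.
Implicit Types (B : pred A) (a b c : A) (s t v w y : seq A).

(* [Star B] denotes B^*, [Opt a] denotes (a + eps). *)
Inductive atom := Star of pred A | Opt of A.

Definition ideal := seq atom.
Implicit Types I : ideal.

Fixpoint dropwhile B s := if s is c :: s' then (if B c then dropwhile B s' else s) else [::].

Fixpoint residual I v :=
  match I with
  | [::] => v
  | Star B :: I' => residual I' (dropwhile B v)
  | Opt a :: I' =>
      if v is c :: v' then (if c == a then residual I' v' else residual I' v)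
      else residual I' [::]
  end.

Definition imem I v := residual I v == [::].

Lemma subseq_cons2 c s t : subseq (c :: s) (c :: t) = subseq s t.
Proof. by rewrite /= eqxx. Qed.

Lemma subseq_consl_neq x c s t : x != c ->
  subseq (x :: s) (c :: t) = subseq (x :: s) t.
Proof. by move=> /negbTE /= ->. Qed.

Lemma dropwhile_subseq B s : subseq (dropwhile B s) s.
Proof.
elim: s => //= c s IH; case: (B c); last exact: (subseq_refl (c :: s)).
exact: subseq_trans IH (subseq_cons _ _).
Qed.

Lemma dropwhile_subseq_mono B w v :
  subseq w v -> subseq (dropwhile B w) (dropwhile B v).
Proof.
elim: v w => [|c v IH] [|x w] // H; first exact: sub0seq.
rewrite [dropwhile B (c :: v)]/=.
case Bc: (B c); last exact: subseq_trans (dropwhile_subseq _ _) H.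
case: (eqVneq x c) H => [-> | nxc] H.
  by rewrite /= Bc; apply: IH; rewrite subseq_cons2 in H.
by apply: (IH (x :: w)); rewrite -(subseq_consl_neq _ _ nxc).
Qed.

Lemma dropwhile_cat_all B t s : all B t -> dropwhile B (t ++ s) = dropwhile B s.
Proof. by elim: t => //= c t IH /andP [-> /IH]. Qed.

Lemma dropwhile_split B s : exists2 t, s = t ++ dropwhile B s & all B t.
Proof.
elim: s => [|c s [t E Ht]] /=; first by exists [::].
case Bc: (B c); last by exists [::].
by exists (c :: t); rewrite /= ?Bc -?E.
Qed.

Lemma dropwhile_nil B s : (dropwhile B s == [::]) = all B s.
Proof. by elim: s => //= c s IH; case: (B c). Qed.

Lemma dropwhile_head B c s t : dropwhile B s = c :: t -> ~~ B c.
Proof. by elim: s => //= d s IH; case Bd: (B d) => // - [<-]; rewrite Bd. Qed.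

Lemma dropwhile_catr B s t : subseq (dropwhile B (s ++ t)) (dropwhile B s ++ t).
Proof. by elim: s => [|c s IH] /=; [exact: dropwhile_subseq | case: (B c)]. Qed.

Lemma residual_subseq_mono I w v : subseq w v -> subseq (residual I w) (residual I v).
Proof.
elim: I w v => [|[B|a] I IH] w v //= H; first exact: IH (dropwhile_subseq_mono B H).
case: v w H => [|c v] [|x w] //= H; first by case: ifP => _; apply: IH; exact: sub0seq.
case: (eqVneq c a) => [ca | nca]; case: (eqVneq x a) => [xa | xna]; apply: IH => //.
- by move: H; rewrite xa ca eqxx.
- by move: H; rewrite ca (negbTE xna).
- move: H; rewrite xa eq_sym (negbTE nca) => H.
  exact: subseq_trans (subseq_cons w a) (subseq_trans H (subseq_cons v c)).
Qed.

Lemma imem_subseq I w v : subseq w v -> imem I v -> imem I w.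
Proof. by move=> /(residual_subseq_mono I) + /eqP E; rewrite /imem E subseq0. Qed.

Lemma residual_cat I1 I2 v : residual (I1 ++ I2) v = residual I2 (residual I1 v).
Proof. by elim: I1 v => [|[B|a] I1 IH] [|c v] //=; case: ifP. Qed.

Lemma residual_catr I s t : subseq (residual I (s ++ t)) (residual I s ++ t).
Proof.
elim: I s t => [|[B|a] I IH] s t /=; first exact: subseq_refl.
  exact: subseq_trans (residual_subseq_mono _ (dropwhile_catr _ _ _)) (IH _ _).
case: s => [|c s] /=; last by case: ifP => _; [exact: IH | exact: (IH (c :: s))].
case: t => [|d t] /=; first by rewrite cats0 subseq_refl.
case: ifP => _; last exact: (IH [::] (d :: t)).
apply: subseq_trans (IH [::] t) _; rewrite subseq_cat2l; exact: subseq_cons.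
Qed.

Lemma imem_cat I1 I2 s t : imem I1 s -> imem I2 t -> imem (I1 ++ I2) (s ++ t).
Proof.
rewrite /imem residual_cat => /eqP E1 /eqP E2.
by have := residual_subseq_mono I2 (residual_catr I1 s t); rewrite E1 E2 subseq0.
Qed.

Lemma imem_opt_cons a I v : imem I v -> imem (Opt a :: I) v.
Proof.
rewrite /imem /= => /eqP E; case: v E => [|c v] E; first by rewrite E.
case: ifP => _; last by rewrite E.
by have := residual_subseq_mono I (subseq_cons v c); rewrite E subseq0.
Qed.

Lemma imem_star_cons B I v : imem I v -> imem (Star B :: I) v.
Proof.
move=> /eqP E; have := residual_subseq_mono I (dropwhile_subseq B v).
by rewrite /imem /= E subseq0.
Qed.

Lemma residual_prefix I v : exists2 p, v = p ++ residual I v & imem I p.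
Proof.
elim: I v => [|[B|a] I IH] v /=; first by exists [::].
  have [t Et Bt] := dropwhile_split B v; have [p Ep Ip] := IH (dropwhile B v).
  exists (t ++ p); first by rewrite -catA -Ep.
  by rewrite /imem /= dropwhile_cat_all //; apply: imem_subseq (dropwhile_subseq _ _) Ip.
case: v => [|c v]; first by have [p Ep Ip] := IH [::]; exists p; last exact: imem_opt_cons.
case: (eqVneq c a) => [-> | nca]; last first.
  by have [p Ep Ip] := IH (c :: v); exists p; last exact: imem_opt_cons.
by have [p Ep Ip] := IH v; exists (a :: p); rewrite /= -?Ep // /imem /= eqxx.
Qed.

Lemma imem_catP I1 I2 v :
  imem (I1 ++ I2) v -> exists s t, [/\ v = s ++ t, imem I1 s & imem I2 t].
Proof.
have [p Ep Ip] := residual_prefix I1 v.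
by rewrite /imem residual_cat => H; exists p, (residual I1 v).
Qed.

Lemma imem_star B v : imem [:: Star B] v = all B v.
Proof. by rewrite /imem /= dropwhile_nil. Qed.

Lemma imem_opt a v : imem [:: Opt a] v -> subseq v [:: a].
Proof. by case: v => [|c v] //; rewrite /imem /=; case: (eqVneq c a) => [->|]. Qed.

Lemma imem_map_opt s : imem (map Opt s) s.
Proof. by elim: s => //= a s IH; rewrite /imem /= eqxx. Qed.

Lemma imem_map_optP s v : imem (map Opt s) v -> subseq v s.
Proof.
elim: s v => [|a s IH] v; first by rewrite /imem /= => /eqP ->.
move=> /(@imem_catP [:: Opt a]) [v1 [v2 [-> /imem_opt H1 /IH H2]]].
by rewrite -cat1s cat_subseq.
Qed.

Lemma imem_cons X I v : imem (X :: I) v = imem I (residual [:: X] v).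
Proof. by rewrite /imem -residual_cat. Qed.

Lemma residual1_nil X : residual [:: X] [::] = [::].
Proof. by case: X. Qed.

Lemma subseq_cons_tail c t w :
  subseq w (c :: t) -> exists w', [/\ subseq w (c :: w'), subseq w' t & size w' <= size w].
Proof.
case: w => [|x w]; first by exists [::]; rewrite !sub0seq.
case: (eqVneq x c) => [-> | nxc]; first by rewrite subseq_cons2; exists w.
rewrite subseq_consl_neq // => H; exists (x :: w).
by rewrite subseq_consl_neq // subseq_refl.
Qed.

Lemma witness_head X I v c t w :
  subseq (c :: t) v -> (forall z, residual [:: X] (c :: z) = c :: z) ->
  subseq w (c :: t) -> ~~ imem I w ->
  exists w', [/\ subseq w' v, size w' <= (size w).+1 & ~~ imem (X :: I) w'].
Proof.
move=> ctv Xc /subseq_cons_tail [w' [ww' w't Sw']] NIw.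
exists (c :: w'); split => //; first by apply: subseq_trans ctv; rewrite subseq_cons2.
by rewrite imem_cons Xc; apply: contra NIw; apply: imem_subseq.
Qed.

Lemma witness_cons X I v w : subseq w (residual [:: X] v) -> ~~ imem I w ->
  exists w', [/\ subseq w' v, size w' <= (size w).+1 & ~~ imem (X :: I) w'].
Proof.
case: w => [|x w] Hw NIw; first by exists [::]; rewrite sub0seq imem_cons residual1_nil.
case: X Hw => [B|a] /= Hw.
  case E: (dropwhile B v) Hw => [|c t] Hw //; apply: (witness_head _ _ Hw NIw).
    by rewrite -E dropwhile_subseq.
  by move=> z /=; rewrite (negbTE (dropwhile_head E)).
case: v Hw => [|b v] // Hw; case: (eqVneq b a) => [eba | nba].
  have {}Hw : subseq (x :: w) v by move: Hw; rewrite /= eba eqxx.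
  by exists (a :: x :: w); rewrite eba subseq_cons2 imem_cons /= eqxx; split.
have {}Hw : subseq (x :: w) (b :: v) by move: Hw; rewrite /= (negbTE nba).
apply: (witness_head _ _ Hw NIw); first exact: subseq_refl.
by move=> z /=; rewrite (negbTE nba).
Qed.

Lemma not_imem_witness I v :
  ~~ imem I v -> exists w, [/\ subseq w v, size w <= (size I).+1 & ~~ imem I w].
Proof.
elim: I v => [|X I IH] v.
  by case: v => [|c v] // _; exists [:: c]; rewrite sub1seq mem_head.
rewrite imem_cons => /IH [w [Hw Sw NIw]]; have [w' [H1 H2 H3]] := witness_cons Hw NIw.
by exists w'; split => //; apply: leq_trans H2 _.
Qed.

Lemma imem_simn I n u v : size I < n -> simn n u v -> imem I u -> imem I v.
Proof.
move=> In uv Iu; apply/negPn/negP => /not_imem_witness [w [wv Sw NIw]].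
by move: NIw; rewrite (imem_subseq _ Iu) // uv //; apply: leq_trans Sw In.
Qed.

Lemma PT_ideal_cover n (L : lang A) :
  (forall v, L v -> exists I, [/\ size I < n, imem I v & forall y, imem I y -> L y]) ->
  PT n L.
Proof.
move=> cover u v uv; split=> /cover [I [In Iuv IL]]; apply: IL.
  exact: imem_simn uv Iuv.
by apply: (imem_simn In _ Iuv) => w Sw; rewrite uv.
Qed.

Definition ideal_below (L : lang A) I :=
  forall y, imem I y -> exists2 x, L x & subseq y x.

Definition ideal_strictly_below (L : lang A) I :=
  forall y, imem I y -> exists x, [/\ L x, subseq y x & size y < size x].

Lemma PT_dclosure n (L : lang A) :
  (forall u, L u -> exists I, [/\ size I < n, imem I u & ideal_below L I]) ->
  PT n (dclosure L).
Proof.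
move=> cover; apply: PT_ideal_cover => v [u [Lu vu]].
have [I [In Iu IL]] := cover u Lu; exists I; split => // [|y /IL [x Lx yx]].
  exact: imem_subseq Iu.
by exists x.
Qed.

Lemma subseq_strict_size v u : subseq v u -> v != u -> size v < size u.
Proof. by move=> /size_subseq_leqif /leqifP; case: eqP. Qed.

Lemma PT_sdclosure n (L : lang A) :
  (forall u, L u -> size u <= n \/
     exists I, [/\ size I < n, imem I u & ideal_strictly_below L I]) ->
  PT n (sdclosure L).
Proof.
move=> cover; apply: PT_ideal_cover => v [u [Lu [vu nvu]]].
have vu_lt := subseq_strict_size vu nvu.
case: (cover u Lu) => [Su | [I [In Iu IL]]].
  exists (map Opt v); rewrite size_map imem_map_opt; split => //.
    exact: leq_trans vu_lt Su.
  move=> y /imem_map_optP yv; exists u; split => //; split; first exact: subseq_trans yv vu.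
  by apply/eqP => yu; move: (size_subseq yv); rewrite yu leqNgt vu_lt.
exists I; split => //; first exact: imem_subseq Iu.
move=> y /IL [x [Lx yx Syx]]; exists x; split => //; split => //.
by apply/eqP => yx'; move: Syx; rewrite yx' ltnn.
Qed.

Lemma ideal_below_sub (L L' : lang A) I :
  (forall x, L x -> L' x) -> ideal_below L I -> ideal_below L' I.
Proof. by move=> LL' IL y /IL [x /LL' Lx yx]; exists x. Qed.

Lemma ideal_strictly_below_sub (L L' : lang A) I :
  (forall x, L x -> L' x) -> ideal_strictly_below L I -> ideal_strictly_below L' I.
Proof. by move=> LL' IL y /IL [x [/LL' Lx yx Syx]]; exists x. Qed.

Section Concatenation.
Variables (L1 L2 L : lang A) (I1 I2 : ideal).
Hypothesis L_cat : forall x1 x2, L1 x1 -> L2 x2 -> L (x1 ++ x2).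

Lemma ideal_below_cat : ideal_below L1 I1 -> ideal_below L2 I2 -> ideal_below L (I1 ++ I2).
Proof.
move=> IL1 IL2 y /imem_catP [y1 [y2 [-> /IL1 [x1 Lx1 yx1] /IL2 [x2 Lx2 yx2]]]].
by exists (x1 ++ x2); [exact: L_cat | exact: cat_subseq].
Qed.

Lemma ideal_strictly_below_catl : ideal_strictly_below L1 I1 -> ideal_below L2 I2 ->
  ideal_strictly_below L (I1 ++ I2).
Proof.
move=> IL1 IL2 y /imem_catP [y1 [y2 [-> /IL1 [x1 [Lx1 yx1 Sx1]] /IL2 [x2 Lx2 yx2]]]].
exists (x1 ++ x2); split; [exact: L_cat | exact: cat_subseq |].
by rewrite !size_cat -addSn leq_add // size_subseq.
Qed.

Lemma ideal_strictly_below_catr : ideal_below L1 I1 -> ideal_strictly_below L2 I2 ->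
  ideal_strictly_below L (I1 ++ I2).
Proof.
move=> IL1 IL2 y /imem_catP [y1 [y2 [-> /IL1 [x1 Lx1 yx1] /IL2 [x2 [Lx2 yx2 Sx2]]]]].
exists (x1 ++ x2); split; [exact: L_cat | exact: cat_subseq |].
by rewrite !size_cat -addnS leq_add // size_subseq.
Qed.
End Concatenation.

Definition rep k s := flatten (nseq k s).

Lemma size_rep k s : size (rep k s) = k * size s.
Proof. by elim: k => [|k IH] //=; rewrite size_cat IH mulSn. Qed.

Lemma rep_catC k s : rep k s ++ s = s ++ rep k s.
Proof. by elim: k => [|k IH] /=; rewrite ?cats0 // -catA IH. Qed.

Lemma rep_subseq_mono k k' s : k <= k' -> subseq (rep k s) (rep k' s).
Proof.
elim: k k' => [|k IH] [|k'] //= kk'; first exact: sub0seq.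
by rewrite subseq_cat2l IH.
Qed.

Lemma subseq_rep s y : all (fun b => b \in s) y -> subseq y (rep (size y) s).
Proof.
by elim: y => //= b y IH /andP [bs /IH ys]; rewrite -cat1s cat_subseq // sub1seq.
Qed.

Definition sandwich s I t : ideal :=
  Star (fun b => b \in s) :: I ++ [:: Star (fun b => b \in t)].

Lemma size_sandwich s I t : size (sandwich s I t) = (size I).+2.
Proof. by rewrite /= size_cat addn1. Qed.

Lemma imem_sandwich s I t v : imem I v -> imem (sandwich s I t) (s ++ v ++ t).
Proof.
move=> Iv; rewrite /sandwich -cat1s; apply: imem_cat; first by rewrite imem_star; apply/allP.
by apply: imem_cat => //; rewrite imem_star; apply/allP.
Qed.

Lemma imem_sandwichP s I t y : imem (sandwich s I t) y ->
  exists y1 y2 y3, [/\ y = y1 ++ y2 ++ y3, all (fun b => b \in s) y1, imem I y2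
                     & all (fun b => b \in t) y3].
Proof.
move=> /(@imem_catP [:: Star _]) [y1 [y' [-> Iy1 /imem_catP [y2 [y3 [-> Iy2 Iy3]]]]]].
by exists y1, y2, y3; rewrite -!imem_star.
Qed.

Section Pumping.
Variables (L L' : lang A) (s t : seq A) (I : ideal).
Hypothesis L_pump : forall k x, L' x -> L (rep k s ++ x ++ rep k t).

Lemma sandwich_witness y : ideal_below L' I -> imem (sandwich s I t) y ->
  exists x, [/\ L x, subseq y x & s ++ t != [::] -> size y < size x].
Proof.
move=> IL /imem_sandwichP [y1 [y2 [y3 [-> y1s /IL [x2 Lx2 yx2] y3t]]]].
(* k copies of s absorb y1, k copies of t absorb y3, and the extra copy makes
   the witness strictly longer as soon as s ++ t is not empty. *)
have [k kE] : exists k, k = (size y1 + size y3).+1 by eexists.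
exists (rep k s ++ x2 ++ rep k t); split; first exact: L_pump.
  apply: cat_subseq; last apply: cat_subseq yx2 _.
    by apply: subseq_trans (subseq_rep y1s) (rep_subseq_mono _ _); lia.
  by apply: subseq_trans (subseq_rep y3t) (rep_subseq_mono _ _); lia.
rewrite -size_eq0 size_cat => st0; rewrite !size_cat !size_rep.
have : k <= k * size s + k * size t by rewrite -mulnDr leq_pmulr // lt0n.
by have := size_subseq yx2; lia.
Qed.

Lemma ideal_below_sandwich : ideal_below L' I -> ideal_below L (sandwich s I t).
Proof. by move=> IL y /(sandwich_witness IL) [x [Lx yx _]]; exists x. Qed.

Lemma ideal_strictly_below_sandwich : s ++ t != [::] -> ideal_below L' I ->
  ideal_strictly_below L (sandwich s I t).
Proof.
move=> st0 IL y /(sandwich_witness IL) [x [Lx yx Syx]].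
by exists x; split => //; apply: Syx.
Qed.
End Pumping.

Lemma imem_sandwich_nil I y : imem (sandwich [::] I [::]) y -> imem I y.
Proof.
move=> /imem_sandwichP [y1 [y2 [y3 [-> y1s Iy2 y3t]]]].
by case: y1 y1s => //; case: y3 y3t => // _ _; rewrite cats0.
Qed.
End Ideals.

Section Automata.
Variables (A : finType) (M : nfa A).
Local Notation state := (nfa_state M).
Local Notation edge := (@nfa_edge A M).
Implicit Types (p q t : state) (s : seq (A * state)).

Fixpoint run p s := if s is (a, q) :: s' then nfa_trans p a q && run q s' else true.

Definition run_end p s := last p (map snd s).

Lemma run_end_cat p s1 s2 : run_end p (s1 ++ s2) = run_end (run_end p s1) s2.
Proof. by rewrite /run_end map_cat last_cat. Qed.

Lemma run_cat p s1 s2 : run p (s1 ++ s2) = run p s1 && run (run_end p s1) s2.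
Proof. by elim: s1 p => [|[a q] s1 IH] p //=; rewrite IH andbA. Qed.

Lemma accept_from_run q x : nfa_accept_from q x ->
  exists s, [/\ run q s, map fst s = x & nfa_final (run_end q s)].
Proof.
elim: x q => [|a x IH] q /=; first by exists [::].
by move=> /existsP [q' /andP [aq' /IH [s [rs <- fs]]]]; exists ((a, q') :: s); rewrite /= aq'.
Qed.

Lemma run_accept q s : run q s -> nfa_final (run_end q s) -> nfa_accept_from q (map fst s).
Proof.
elim: s q => [|[a q'] s IH] q //= /andP [aq' rs] fs.
by apply/existsP; exists q'; rewrite aq' IH.
Qed.

Lemma run_path p s : run p s -> path edge p (map snd s).
Proof.
elim: s p => [|[a q] s IH] p //= /andP [apq rs].
by rewrite IH // andbT; apply/existsP; exists a.
Qed.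

Lemma run_connect p s : run p s -> connect edge p (run_end p s).
Proof. by move=> /run_path ps; apply/connectP; exists (map snd s). Qed.

Lemma connect_run p q : connect edge p q -> exists2 s, run p s & run_end p s = q.
Proof.
move=> /connectP [qs + ->]; elim: qs p => [|q1 qs IH] p /=; first by exists [::].
move=> /andP [/existsP [a apq1] /IH [s rs es]].
by exists ((a, q1) :: s); rewrite /= ?apq1.
Qed.

Definition loop_letters p : pred A := fun b =>
  [exists q, exists q', [&& connect edge p q, nfa_trans q b q' & connect edge q' p]].

Lemma cycle_loop_letters p s :
  run p s -> run_end p s = p -> all (loop_letters p) (map fst s).
Proof.
move=> rs es; apply/allP => b /mapP [[a q] aqs ->] /=.
move: rs es; case/splitPr: aqs => s1 s2.
rewrite run_cat run_end_cat /= => /and3P [rs1 atq rs2] es.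
apply/existsP; exists (run_end p s1); apply/existsP; exists q.
by rewrite run_connect //= atq -[X in connect _ _ X]es run_connect.
Qed.

Lemma loop_letters_cycle p y : all (loop_letters p) y ->
  exists s, [/\ run p s, run_end p s = p & subseq y (map fst s)].
Proof.
elim: y => [|b y IH] /=; first by exists [::].
case/andP=> /existsP [q /existsP [q' /and3P [pq bq'q q'p]]] /IH [s3 [rs3 es3 ys3]].
have [s1 rs1 es1] := connect_run pq; have [s2 rs2 es2] := connect_run q'p.
exists (s1 ++ (b, q') :: s2 ++ s3); split.
- by rewrite run_cat rs1 es1 /= bq'q run_cat rs2 es2.
- rewrite run_end_cat es1; change (run_end q' (s2 ++ s3) = p).
  by rewrite run_end_cat es2.
- rewrite map_cat /=; apply: subseq_trans (suffix_subseq _ _).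
  by rewrite subseq_cons2 map_cat; apply: subseq_trans ys3 (suffix_subseq _ _).
Qed.

Fixpoint path_ideal p s : ideal A :=
  Star (loop_letters p) :: (if s is (a, q) :: s' then Opt a :: path_ideal q s' else [::]).

Lemma size_path_ideal p s : size (path_ideal p s) = (size s).*2.+1.
Proof. by elim: s p => [|[a q] s IH] p //=; rewrite IH. Qed.

Lemma imem_path_ideal_loop p s x y : all (loop_letters p) x ->
  imem (path_ideal p s) y -> imem (path_ideal p s) (x ++ y).
Proof.
have -> : path_ideal p s = Star (loop_letters p) :: behead (path_ideal p s) by case: s.
by move=> xp; rewrite !imem_cons /= dropwhile_cat_all.
Qed.

Definition simple_run p s := run p s && uniq (p :: map snd s).

Definition shortcut p s st :=
  [/\ simple_run p st, run_end p st = run_end p s,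
      {subset map snd st <= p :: map snd s}, imem (path_ideal p st) (map fst s)
    & st = s \/ exists t b, t \in p :: map snd st /\ loop_letters t b].

Lemma shortcut_nil p : shortcut p [::] [::].
Proof. by split => //; left. Qed.

Lemma shortcut_cycle p c s st : run p c -> run_end p c = p -> c != [::] ->
  shortcut p s st -> shortcut p (c ++ s) st.
Proof.
move=> rc ec nc [rst est sst Ist _]; have cp := cycle_loop_letters rc ec.
split => //.
- by rewrite run_end_cat ec.
- by move=> t /sst; rewrite !inE map_cat mem_cat => /orP [-> | ->]; rewrite ?orbT.
- by rewrite map_cat imem_path_ideal_loop.
- right; exists p; case: c nc cp {rc ec} => [|[b q] c] //= _ /andP [bp _].
  by exists b; rewrite mem_head.
Qed.

Lemma shortcut_cons p a q s st : nfa_trans p a q -> p \notin q :: map snd s ->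
  shortcut q s st -> shortcut p ((a, q) :: s) ((a, q) :: st).
Proof.
move=> apq ps [/andP [rst ust] est sst Ist lst]; split => //.
- rewrite /simple_run [run _ _]/= apq rst map_cons (cons_uniq p) ust /= andbT.
  by apply: contraNN ps; rewrite !inE => /orP [-> // | /sst]; rewrite inE.
- move=> t; rewrite /= !inE => /orP [-> | /sst]; first by rewrite orbT.
  by rewrite inE => ->; rewrite orbT.
- by rewrite imem_star_cons // imem_cons /= eqxx.
- case: lst => [-> | [t [b [tst tb]]]]; [by left | right].
  by exists t, b; rewrite inE tst orbT.
Qed.

Lemma run_shortcut p s : run p s -> exists st, shortcut p s st.
Proof.
have [n] := ubnP (size s); elim: n p s => // n IHn p s Ss rs.
case: (boolP (p \in map snd s)) => [/mapP [[b p'] bs /= ep'] | ps].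
  move: Ss rs; rewrite -{p'}ep' in bs *; case/splitPr: bs => s1 s2.
  rewrite -cat_rcons size_cat run_cat => Ss /andP [rc rs2].
  have ec : run_end p (rcons s1 (b, p)) = p by rewrite /run_end map_rcons last_rcons.
  rewrite ec in rs2; have [|st sst] := IHn p s2 _ rs2.
    by move: Ss; rewrite size_rcons; lia.
  by exists st; apply: shortcut_cycle; rewrite // -size_eq0 size_rcons.
case: s Ss rs ps => [|[a q] s] Ss rs ps; first by exists [::]; exact: shortcut_nil.
move: rs => /andP [apq rs]; have [st sst] := IHn q s Ss rs.
by exists ((a, q) :: st); exact: shortcut_cons.
Qed.

Lemma path_ideal_sound p st y : run p st -> imem (path_ideal p st) y ->
  exists s, [/\ run p s, run_end p s = run_end p st, subseq y (map fst s)
              & {subset p :: map snd st <= p :: map snd s}].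
Proof.
elim: st p y => [|[a q] st IH] p y.
  rewrite /= imem_star => _ /loop_letters_cycle [s [rs es ys]].
  by exists s; split => // t; rewrite inE => /eqP ->; rewrite mem_head.
move=> /= /andP [apq rst] /(@imem_catP _ [:: Star _]) [y1 [y' [-> Iy1]]].
move=> /(@imem_catP _ [:: Opt a]) [y2 [y3 [-> /imem_opt y2a /(IH _ _ rst)]]].
move=> [s3 [rs3 es3 ys3 ss3]]; rewrite imem_star in Iy1.
have [s1 [rs1 es1 ys1]] := loop_letters_cycle Iy1.
exists (s1 ++ (a, q) :: s3); split.
- by rewrite run_cat rs1 es1 /= apq rs3.
- by rewrite run_end_cat es1; change (run_end q s3 = run_end q st).
- rewrite map_cat; apply: cat_subseq ys1 _.
  by change (subseq (y2 ++ y3) ([:: a] ++ map fst s3)); apply: cat_subseq.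
- move=> t; rewrite inE => /orP [/eqP -> | /ss3]; first exact: mem_head.
  by rewrite map_cat /= !inE mem_cat inE => /orP [-> | ->]; rewrite ?orbT.
Qed.

Lemma run_split_at p s t : t \in p :: map snd s ->
  exists s1 s2, s = s1 ++ s2 /\ run_end p s1 = t.
Proof.
rewrite inE => /orP [/eqP -> | /mapP [[a q] /splitPr [s1 s2] /= ->]].
  by exists [::], s.
exists (rcons s1 (a, q)), s2; split; first by rewrite cat_rcons.
by rewrite /run_end map_rcons last_rcons.
Qed.

Lemma run_insert_loop p s t b : run p s -> t \in p :: map snd s -> loop_letters t b ->
  exists s', [/\ run p s', run_end p s' = run_end p s,
                 subseq (map fst s) (map fst s') & size s < size s'].
Proof.
move=> rs /run_split_at [s1 [s2 [Es es1]]] tb; rewrite {s}Es in rs *.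
have [|l [rl el bl]] := @loop_letters_cycle t [:: b]; first by rewrite /= tb.
move: rs; rewrite run_cat es1 => /andP [rs1 rs2].
exists (s1 ++ l ++ s2); split.
- by rewrite !run_cat es1 rs1 rl el rs2.
- by rewrite !run_end_cat es1 el.
- by rewrite !map_cat cat_subseq // -[map fst s2]cat0s cat_subseq ?sub0seq.
- by move: (size_subseq bl); rewrite size_map !size_cat /=; lia.
Qed.

Lemma accepted_simple_run m u :
  (forall q0 qs, simple_acc_path q0 qs -> size qs <= m) -> nfa_lang M u ->
  exists q0 st, [/\ nfa_init q0, run q0 st, nfa_final (run_end q0 st) /\ size st <= m,
    imem (path_ideal q0 st) u
    & map fst st = u \/ exists t b, t \in q0 :: map snd st /\ loop_letters t b].
Proof.
move=> depth [q0 iq0 /accept_from_run [s [rs <- fin]]].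
have [st [/andP [rst ust] est _ Ist lst]] := run_shortcut rs.
exists q0, st; split => //; last by case: lst => [-> | ]; [left | right].
rewrite est fin -(size_map snd); split => //; apply: (depth q0).
by rewrite /simple_acc_path iq0 run_path //= -/(run_end q0 st) est fin.
Qed.

Lemma path_ideal_below q0 st : nfa_init q0 -> run q0 st -> nfa_final (run_end q0 st) ->
  ideal_below (nfa_lang M) (path_ideal q0 st).
Proof.
move=> iq0 rst fin y /(path_ideal_sound rst) [s [rs es ys _]].
by exists (map fst s) => //; exists q0 => //; apply: run_accept; rewrite ?es.
Qed.

Lemma path_ideal_strictly_below q0 st t b :
  nfa_init q0 -> run q0 st -> nfa_final (run_end q0 st) ->
  t \in q0 :: map snd st -> loop_letters t b ->
  ideal_strictly_below (nfa_lang M) (path_ideal q0 st).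
Proof.
move=> iq0 rst fin tst tb y /(path_ideal_sound rst) [s [rs es ys sts]].
have [s' [rs' es' ss' Ss']] := run_insert_loop rs (sts t tst) tb.
exists (map fst s'); split; first by exists q0 => //; apply: run_accept; rewrite ?es' ?es.
  exact: subseq_trans ys ss'.
by apply: leq_ltn_trans (size_subseq ys) _; rewrite !size_map.
Qed.

Lemma nfa_dclosure_PT m : nfa_depth M m -> PT (2 * m + 2) (dclosure (nfa_lang M)).
Proof.
move=> [_ depth]; apply: PT_dclosure => u /(accepted_simple_run depth).
move=> [q0 [st [iq0 rst [fin Sst] Iu _]]]; exists (path_ideal q0 st); split => //.
  by rewrite size_path_ideal -mul2n; lia.
exact: path_ideal_below.
Qed.

Lemma nfa_sdclosure_PT m : nfa_depth M m -> PT (2 * m + 2) (sdclosure (nfa_lang M)).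
Proof.
move=> [_ depth]; apply: PT_sdclosure => u /(accepted_simple_run depth).
move=> [q0 [st [iq0 rst [fin Sst] Iu [<- | [t [b [tst tb]]]]]]].
  by left; rewrite size_map; lia.
right; exists (path_ideal q0 st); split => //.
  by rewrite size_path_ideal -mul2n; lia.
exact: path_ideal_strictly_below tst tb.
Qed.
End Automata.

Section Grammars.
Variables (A : finType) (G : qnf_grammar A).
Local Notation nt := (nonterm G).
Local Notation derives := (@derives A G).
Implicit Types (S : {set nt}) (X Y Z T : nt) (x u w : seq A).

Inductive derives_in S : nt -> seq A -> Prop :=
  | din_bin X Y Z u w : X \in S -> prod_bin X Y Z -> derives_in S Y u -> derives_in S Z w ->
      derives_in S X (u ++ w)
  | din_unit X Y u : X \in S -> prod_unit X Y -> derives_in S Y u -> derives_in S X u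
  | din_term X a : X \in S -> prod_term X a -> derives_in S X [:: a]
  | din_eps X : X \in S -> prod_eps X -> derives_in S X [::].

Lemma derives_inT X x : derives X x -> derives_in [set: nt] X x.
Proof.
elim=> {X x} [X Y Z u w XYZ _ Yu _ Zw|X Y u XY _ Yu|X a Xa|X Xe].
- exact: din_bin (in_setT X) XYZ Yu Zw.
- exact: din_unit (in_setT X) XY Yu.
- exact: din_term (in_setT X) Xa.
- exact: din_eps (in_setT X) Xe.
Qed.

Lemma derives_in_derives S X x : derives_in S X x -> derives X x.
Proof.
elim=> {X x} [X Y Z u w _ XYZ _ Yu _ Zw|X Y u _ XY _ Yu|X a _ Xa|X _ Xe].
- exact: der_bin XYZ Yu Zw.
- exact: der_unit XY Yu.
- exact: der_term Xa.
- exact: der_eps Xe.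
Qed.

Lemma derives_in_mem S X x : derives_in S X x -> X \in S.
Proof. by case. Qed.

(* [derives_ctx X T u w] means X =>* u T w. *)
Inductive derives_ctx : nt -> nt -> seq A -> seq A -> Prop :=
  | ctx_refl X : derives_ctx X X [::] [::]
  | ctx_binl X Y Z T u w v : prod_bin X Y Z -> derives_ctx Y T u w -> derives Z v ->
      derives_ctx X T u (w ++ v)
  | ctx_binr X Y Z T u w v : prod_bin X Y Z -> derives Y v -> derives_ctx Z T u w ->
      derives_ctx X T (v ++ u) w
  | ctx_unit X Y T u w : prod_unit X Y -> derives_ctx Y T u w -> derives_ctx X T u w.

Lemma derives_ctx_plug X T u w x :
  derives_ctx X T u w -> derives T x -> derives X (u ++ x ++ w).
Proof.
elim=> {X T u w}
  [X|X Y Z T u w v XYZ _ IH Zv|X Y Z T u w v XYZ Yv _ IH|X Y T u w XY _ IH] Tx.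
- by rewrite cats0.
- by have := der_bin XYZ (IH Tx) Zv; rewrite -!catA.
- by rewrite -catA; apply: der_bin XYZ Yv (IH Tx).
- exact: der_unit XY (IH Tx).
Qed.

Lemma derives_ctx_comp X T R u w u' w' :
  derives_ctx X T u w -> derives_ctx T R u' w' -> derives_ctx X R (u ++ u') (w' ++ w).
Proof.
move=> H; elim: H u' w' => {X T u w}
  [X|X Y Z T u w v XYZ _ IH Zv|X Y Z T u w v XYZ Yv _ IH|X Y T u w XY _ IH] u' w' TR.
- by rewrite cats0.
- by rewrite catA; apply: ctx_binl XYZ (IH _ _ TR) Zv.
- by rewrite -catA; apply: ctx_binr XYZ Yv (IH _ _ TR).
- exact: ctx_unit XY (IH _ _ TR).
Qed.

Lemma derives_ctx_rep X u w k : derives_ctx X X u w -> derives_ctx X X (rep k u) (rep k w).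
Proof.
move=> XX; elim: k => [|k IH]; first exact: ctx_refl.
by have := derives_ctx_comp XX IH; rewrite /rep /= -/(rep k w) rep_catC.
Qed.

(* X derives x by a tree over S in which X occurs only at the root. *)
Definition derives_top S X x :=
  [\/ exists Y Z x1 x2, [/\ prod_bin X Y Z, derives_in (S :\ X) Y x1,
                            derives_in (S :\ X) Z x2 & x = x1 ++ x2],
      exists2 Y, prod_unit X Y & derives_in (S :\ X) Y x,
      exists2 a, prod_term X a & x = [:: a]
    | prod_eps X /\ x = [::]].

Definition top_occurrence S X Y x :=
  exists u w x', [/\ derives_ctx Y X u w, x = u ++ x' ++ w & derives_top S X x'].

Lemma top_occurrence_here S X x : derives_top S X x -> top_occurrence S X X x.
Proof. by exists [::], [::], x; rewrite cats0; split => //; exact: ctx_refl. Qed.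

Lemma derives_in_decomp S X Y x : derives_in S Y x ->
  derives_in (S :\ X) Y x \/ top_occurrence S X Y x.
Proof.
have lift Y' : Y' \in S -> Y' != X -> Y' \in S :\ X by rewrite in_setD1 => -> ->.
elim=> {Y x} [Y Y1 Y2 x1 x2 YS YY Y1x IH1 Y2x IH2|Y Y1 x1 YS YY Y1x IH1|Y a YS Ya|Y YS Ye].
- case: IH1 => [IH1 | [u [w [x' [C -> R]]]]]; last first.
    right; exists u, (w ++ x2), x'; split => //; last by rewrite -!catA.
    exact: ctx_binl YY C (derives_in_derives Y2x).
  case: IH2 => [IH2 | [u [w [x' [C -> R]]]]]; last first.
    right; exists (x1 ++ u), w, x'; split => //; last by rewrite -!catA.
    exact: ctx_binr YY (derives_in_derives Y1x) C.
  case: (eqVneq Y X) => [EYX | YX]; last by left; apply: din_bin (lift _ YS YX) YY IH1 IH2.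
  by subst Y; right; apply: top_occurrence_here; apply: Or41; exists Y1, Y2, x1, x2.
- case: IH1 => [IH1 | [u [w [x' [C E R]]]]]; last first.
    by right; exists u, w, x'; split => //; exact: ctx_unit YY C.
  case: (eqVneq Y X) => [EYX | YX]; last by left; apply: din_unit (lift _ YS YX) YY IH1.
  by subst Y; right; apply: top_occurrence_here; apply: Or42; exists Y1.
- case: (eqVneq Y X) => [EYX | YX]; last by left; apply: din_term (lift _ YS YX) Ya.
  by subst Y; right; apply: top_occurrence_here; apply: Or43; exists a.
- case: (eqVneq Y X) => [EYX | YX]; last by left; apply: din_eps (lift _ YS YX) Ye.
  by subst Y; right; apply: top_occurrence_here; apply: Or44.
Qed.

Definition covers X x n (I : ideal A) :=
  [/\ size I <= n, imem I x, ideal_below (derives X) I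
    & ideal_strictly_below (derives X) I \/ size x <= size I].

Lemma covers_bin X Y Z x1 x2 n1 n2 I1 I2 : prod_bin X Y Z ->
  covers Y x1 n1 I1 -> covers Z x2 n2 I2 -> covers X (x1 ++ x2) (n1 + n2) (I1 ++ I2).
Proof.
move=> XYZ [S1 Ix1 B1 E1] [S2 Ix2 B2 E2]; have L_cat := der_bin XYZ.
split; [by rewrite size_cat leq_add | exact: imem_cat | exact: ideal_below_cat L_cat B1 B2 |].
case: E1 => [St1 | Sx1]; first by left; apply: ideal_strictly_below_catl L_cat St1 B2.
case: E2 => [St2 | Sx2]; first by left; apply: ideal_strictly_below_catr L_cat B1 St2.
by right; rewrite !size_cat leq_add.
Qed.

Lemma covers_unit X Y x n I : prod_unit X Y -> covers Y x n I -> covers X x n I.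
Proof.
move=> XY [SI Ix B E]; have YX := der_unit XY.
split => //; first exact: ideal_below_sub YX B.
by case: E => [St | Sx]; [left; apply: ideal_strictly_below_sub YX St | right].
Qed.

Lemma covers_term X a : prod_term X a -> covers X [:: a] 1 [:: Opt a].
Proof.
move=> Xa; split => //; [by rewrite /imem /= eqxx | | by right].
by move=> y /imem_opt ya; exists [:: a] => //; exact: der_term.
Qed.

Lemma covers_eps X : prod_eps X -> covers X [::] 0 [::].
Proof.
move=> Xe; split => //; last by right.
by move=> y; rewrite /imem /= => /eqP ->; exists [::] => //; exact: der_eps.
Qed.

Lemma covers_pump X u w x n I : derives_ctx X X u w -> covers X x n I ->
  covers X (u ++ x ++ w) n.+2 (sandwich u I w).
Proof.
move=> XX [SI Ix B E].
have pump k x' : derives X x' -> derives X (rep k u ++ x' ++ rep k w).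
  by move=> Xx'; apply: derives_ctx_plug (derives_ctx_rep k XX) Xx'.
split; [by rewrite size_sandwich | exact: imem_sandwich | exact: ideal_below_sandwich pump B |].
case: (eqVneq (u ++ w) [::]) => [uw0 | uw0]; last first.
  by left; apply: ideal_strictly_below_sandwich pump uw0 B.
have [-> ->] : u = [::] /\ w = [::] by case: u uw0 {XX pump} => //; case: w.
case: E => [St | Sx]; last by right; rewrite size_sandwich /= cats0; lia.
by left => y /imem_sandwich_nil /St.
Qed.

Lemma covers_le X x n n' I : n <= n' -> covers X x n I -> covers X x n' I.
Proof. by move=> nn' [SI Ix B E]; split => //; apply: leq_trans nn'. Qed.

Lemma covers_top S X x n :
  (forall Y y, derives_in (S :\ X) Y y -> exists I, covers Y y n I) ->
  derives_top S X x -> exists I, covers X x n.*2.+1 I.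
Proof.
move=> IH [[Y [Z [x1 [x2 [XYZ /IH [I1 c1] /IH [I2 c2] ->]]]]] | [Y XY /IH [I c]]
          | [a Xa ->] | [Xe ->]].
- by exists (I1 ++ I2); apply: covers_le (covers_bin XYZ c1 c2); rewrite -addnn; lia.
- by exists I; apply: covers_le (covers_unit XY c); rewrite -addnn; lia.
- by exists [:: Opt a]; apply: covers_le (covers_term Xa).
- by exists [::]; apply: covers_eps.
Qed.

Fixpoint cfg_bound k := if k is k'.+1 then (cfg_bound k').*2.+3 else 0.

Lemma derives_in_covers k S X x : #|S| <= k -> derives_in S X x ->
  exists I, covers X x (cfg_bound k) I.
Proof.
elim: k S X x => [|k IHk] S X x Sk Xx; have XS := derives_in_mem Xx.
  by move: Sk XS; rewrite leqn0 => /eqP /cards0_eq ->; rewrite in_set0.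
have SXk : #|S :\ X| <= k by move: Sk; rewrite (cardsD1 X S) XS.
case: (derives_in_decomp X Xx) => [/derives_in_mem | [u [w [x' [XX -> top]]]]].
  by rewrite in_setD1 eqxx.
have [I cI] := covers_top (fun Y y => IHk _ Y y SXk) top.
by exists (sandwich u I w); apply: covers_pump.
Qed.

Lemma cfg_bound_pow2 k : (cfg_bound k).+3 = 3 * 2 ^ k.
Proof. by elim: k => [|k IH] //=; rewrite expnS; lia. Qed.

Lemma cfg_bound_lt N : 0 < N -> cfg_bound N < 4 * 3 ^ (N - 1) + 2.
Proof.
case: N => [//|N] _; rewrite subSS subn0; have := cfg_bound_pow2 N.+1.
suff : 3 * 2 ^ N.+1 <= 4 * 3 ^ N + 4.
  by move: (2 ^ N.+1) (3 ^ N) (cfg_bound N.+1) => p q c; lia.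
elim: N => [|N IH] //; have := expn_gt0 3 N; rewrite [2 ^ N.+2]expnS [3 ^ N.+1]expnS.
by move: IH; move: (2 ^ N.+1) (3 ^ N) => p q; lia.
Qed.

Lemma cfg_covers u : cfg_lang G u -> exists I, covers (start G) u (cfg_bound #|nt|) I.
Proof. by move=> /derives_inT; apply: derives_in_covers; rewrite cardsT. Qed.

Lemma cfg_lang_bound : cfg_bound #|nt| < 4 * 3 ^ (#|nt| - 1) + 2.
Proof. by apply: cfg_bound_lt; apply/card_gt0P; exists (start G). Qed.

Lemma cfg_dclosure_PT N : #|nt| = N -> PT (4 * 3 ^ (N - 1) + 2) (dclosure (cfg_lang G)).
Proof.
move=> <-; apply: PT_dclosure => u /cfg_covers [I [SI Iu B _]].
by exists I; split => //; apply: leq_ltn_trans SI cfg_lang_bound.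
Qed.

Lemma cfg_sdclosure_PT N : #|nt| = N -> PT (4 * 3 ^ (N - 1) + 2) (sdclosure (cfg_lang G)).
Proof.
move=> <-; apply: PT_sdclosure => u /cfg_covers [I [SI Iu _ [St | Su]]].
  by right; exists I; split => //; apply: leq_ltn_trans SI cfg_lang_bound.
by left; apply: leq_trans Su (leq_trans SI (ltnW cfg_lang_bound)).
Qed.
End Grammars.

Theorem theorem14 (A : finType) :
  (forall (M : nfa A) (m : nat), nfa_depth M m ->
     PT (2 * m + 2) (dclosure (nfa_lang M)) /\
     PT (2 * m + 2) (sdclosure (nfa_lang M))) /\
  (forall (G : qnf_grammar A) (N : nat), #|nonterm G| = N ->
     PT (4 * 3 ^ (N - 1) + 2) (dclosure (cfg_lang G)) /\
     PT (4 * 3 ^ (N - 1) + 2) (sdclosure (cfg_lang G))).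
Proof.
split=> [M m depth | G N card].
  by split; [exact: nfa_dclosure_PT | exact: nfa_sdclosure_PT].
by split; [exact: cfg_dclosure_PT | exact: cfg_sdclosure_PT].
Qed.
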